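(* Let $\lambda\ge0$, $n\ge0$ an integer and $x\in[-1,1]$. Then $$I^\lambda_+C^{\lambda+1/2}_n(x)=c_{n,\lambda}\frac{\lambda+\frac12}{\lambda+n+\frac12}(1+x)\,{}_2F_1\!\Big(-n,\,n+2\lambda+1;\,\lambda+\tfrac12;\,\tfrac{1-x}2\Big),$$ $$I^\lambda_-C^{\lambda+1/2}_n(x)=c_{n,\lambda}(1-x)\,{}_2F_1\!\Big(-n,\,n+2\lambda+1;\,\lambda+\tfrac32;\,\tfrac{1-x}2\Big),$$ where $c_{n,\lambda}=\frac{\sqrt\pi(2\lambda+1)_n}{n!}\frac{\Gamma(\lambda+1)}{\Gamma(\lambda+\frac32)}$.
   Context: $C^\mu_n$ are Gegenbauer polynomials with generating function $(1-2xr+r^2)^{-\mu}$; ${}_2F_1$ is the Gauss hypergeometric function (terminating here) and $(a)_k$ the Pochhammer symbol. For $f\in L^1[-1,1]$ and $\lambda\ge0$: $I^\lambda_+f(x)=(1+x)^{-\lambda+1/2}\int_{-1}^x(x-\tau)^{-1/2}(1+\tau)^\lambda f(\tau)\,d\tau$, $I^\lambda_-f(x)=(1-x)^{-\lambda+1/2}\int_x^1(\tau-x)^{-1/2}(1-\tau)^\lambda f(\tau)\,d\tau$. *)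

From Stdlib Require Import Reals Lra Lia Arith ClassicalEpsilon.
Open Scope R_scope.

Fixpoint poch (a : R) (k : nat) : R :=
  match k with
  | O => 1
  | S k' => poch a k' * (a + INR k')
  end.

(* Power x^a for x >= 0, with the convention 0^a = 0 for a <> 0, 0^0 = 1. *)
Definition rpow (x a : R) : R :=
  if Req_EM_T x 0 then (if Req_EM_T a 0 then 1 else 0) else Rpower x a.

(* Gegenbauer polynomial C^mu_n(x): coefficient of r^n in (1-2xr+r^2)^(-mu),
   i.e. sum_{k <= n/2} (-1)^k (mu)_{n-k} / (k! (n-2k)!) (2x)^(n-2k). *)
Definition gegenbauer (mu : R) (n : nat) (x : R) : R :=
  sum_f_R0 (fun k => (-1) ^ k * poch mu (n - k)
                       / (INR (Factorial.fact k) * INR (Factorial.fact (n - 2 * k))) * (2 * x) ^ (n - 2 * k))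
           (Nat.div2 n).

(* Terminating hypergeometric series: sum_{k=0}^{m} (a)_k (b)_k / ((c)_k k!) z^k.
   Used with a = -m, so this is the full 2F1. *)
Definition hyp2F1_term (a b c z : R) (m : nat) : R :=
  sum_f_R0 (fun k => poch a k * poch b k / (poch c k * INR (Factorial.fact k)) * z ^ k) m.

(* Euler's limit definition of the Gamma function:
   Gamma z = lim_n n! n^z / (z (z+1) ... (z+n)). *)
Definition gamma_seq (z : R) (n : nat) : R :=
  INR (Factorial.fact n) * Rpower (INR n) z / poch z (S n).

Definition Gamma (z : R) : R :=
  epsilon (inhabits 0) (fun l => Un_cv (gamma_seq z) l).

Definition is_RInt (f : R -> R) (a b v : R) : Prop :=
  exists pr : Riemann_integrable f a b, RiemannInt pr = v.

(* Improper integral over [a,b], possibly singular at the right end b: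
   l = lim_{c -> b^-} int_a^c f ; value 0 when a = b. *)
Definition imp_int_right (f : R -> R) (a b l : R) : Prop :=
  (a = b /\ l = 0) \/
  (a < b /\ forall eps, 0 < eps -> exists delta, 0 < delta /\
     forall c, a <= c -> b - delta < c < b ->
       exists v, is_RInt f a c v /\ Rabs (v - l) < eps).

(* Improper integral over [a,b], possibly singular at the left end a. *)
Definition imp_int_left (f : R -> R) (a b l : R) : Prop :=
  (a = b /\ l = 0) \/
  (a < b /\ forall eps, 0 < eps -> exists delta, 0 < delta /\
     forall c, c <= b -> a < c < a + delta ->
       exists v, is_RInt f c b v /\ Rabs (v - l) < eps).

Definition Iplus (lam : R) (f : R -> R) (x v : R) : Prop :=
  exists l, imp_int_right (fun t => / sqrt (x - t) * rpow (1 + t) lam * f t) (-1) x l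
            /\ rpow (1 + x) (- lam + 1/2) * l = v.

Definition Iminus (lam : R) (f : R -> R) (x v : R) : Prop :=
  exists l, imp_int_left (fun t => / sqrt (t - x) * rpow (1 - t) lam * f t) x 1 l
            /\ rpow (1 - x) (- lam + 1/2) * l = v.

Definition c_const (n : nat) (lam : R) : R :=
  sqrt PI * poch (2 * lam + 1) n / INR (Factorial.fact n) * (Gamma (lam + 1) / Gamma (lam + 3/2)).

From Pilot Require Import Defs.
From Stdlib Require Import Reals Lra Lia ClassicalEpsilon.
From Coquelicot Require Import Coquelicot.
Open Scope R_scope.

(* The Gegenbauer polynomial is a terminating 2F1,
     C^mu_n(t) = (2 mu)_n / n! 2F1(-n, n + 2 mu; mu + 1/2; (1 - t) / 2),
   since both sides have derivative 2 mu C^(mu+1)_(n-1) (induction on n) and agree at t = 1.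
   For mu = lam + 1/2, C^mu_n(-t) is therefore a polynomial in (1 + t) / 2 with bottom
   parameter lam + 1.  The substitution t = x - (1 + x) u^2 removes the singularity of
   I^lam_+ and leaves the integrals K(lam + k) = int_0^1 2 (1 - u^2)^(lam + k) du, and
   K(lam + k) (lam + 3/2)_k = K(lam) (lam + 1)_k raises the bottom parameter to lam + 3/2.
   This is I^lam_- after t -> -t.  For I^lam_+, parity and the reflection formula
     (-1)^n 2F1(-n, b; lam + 3/2; 1 - y) = (lam + 1/2) / (lam + n + 1/2) 2F1(-n, b; lam + 1/2; y)
   for b = n + 2 lam + 1, a consequence of Chu-Vandermonde, give the stated form.
   Finally K(lam) = sqrt pi Gamma(lam + 1) / Gamma(lam + 3/2): K(0) = 2, K(1/2) = pi / 2 and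
   the recurrence give (m/2 + 1) K(m/2) K(m/2 + 1/2) = pi, so by monotonicity
   n K(lam + n)^2 -> pi, which Euler's limit for Gamma turns into that ratio. *)

(** * Real-analysis preliminaries *)

Lemma INR_fact_succ (k : nat) :
  INR (Factorial.fact (S k)) = INR (S k) * INR (Factorial.fact k).
Proof. rewrite <- mult_INR. reflexivity. Qed.

Lemma pow_m1_sqr (k : nat) : (-1) ^ k * (-1) ^ k = 1.
Proof. rewrite <- pow_add, <- (pow_1_even k). f_equal. lia. Qed.

Lemma sum_f_R0_shift (f : nat -> R) (N : nat) :
  sum_f_R0 (fun k => match k with O => 0 | S j => f j end) (S N) = sum_f_R0 f N.
Proof.
  induction N as [|N IH]; [simpl; ring|].
  rewrite tech5, IH, tech5. reflexivity.
Qed.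

Lemma exp_le_compat (x y : R) : x <= y -> exp x <= exp y.
Proof. intros [H| <-]; [left; apply exp_increasing, H|right; reflexivity]. Qed.

(* Coquelicot states these lemmas over abstract normed modules; without the
   explicit instances, [apply] cannot unify them with goals about [R -> R]. *)
Lemma continuous_mult_R (f g : R -> R) (x : R) :
  continuous f x -> continuous g x -> continuous (fun y => f y * g y) x.
Proof. exact (continuous_mult f g x). Qed.

Lemma continuous_comp_R (f g : R -> R) (x : R) :
  continuous f x -> continuous g (f x) -> continuous (fun y => g (f y)) x.
Proof. exact (continuous_comp f g x). Qed.

Lemma ex_derive_continuous_R (f : R -> R) (x : R) : ex_derive f x -> continuous f x.
Proof. exact (ex_derive_continuous (V := R_NormedModule) f x). Qed.

Lemma ex_RInt_continuous_R (f : R -> R) (a b : R) :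
  (forall z, Rmin a b <= z <= Rmax a b -> continuous f z) -> ex_RInt f a b.
Proof. exact (ex_RInt_continuous (V := R_CompleteNormedModule) f a b). Qed.

Lemma RInt_ext_R (f g : R -> R) (a b : R) :
  (forall x, Rmin a b < x < Rmax a b -> f x = g x) -> RInt f a b = RInt g a b.
Proof. exact (RInt_ext f g a b). Qed.

Lemma is_RInt_ext_R (f g : R -> R) (a b l : R) :
  (forall x, Rmin a b < x < Rmax a b -> f x = g x) -> is_RInt f a b l -> is_RInt g a b l.
Proof. exact (is_RInt_ext f g a b l). Qed.

Lemma ex_RInt_scal_R (f : R -> R) (a b k : R) :
  ex_RInt f a b -> ex_RInt (fun x => k * f x) a b.
Proof. exact (ex_RInt_scal f a b k). Qed.

Lemma RInt_scal_R (f : R -> R) (a b k : R) :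
  ex_RInt f a b -> RInt (fun x => k * f x) a b = k * RInt f a b.
Proof. exact (RInt_scal f a b k). Qed.

Lemma RInt_minus_R (f g : R -> R) (a b : R) : ex_RInt f a b -> ex_RInt g a b ->
  RInt (fun x => f x - g x) a b = RInt f a b - RInt g a b.
Proof. exact (RInt_minus f g a b). Qed.

Lemma RInt_sum_f_R0 (f : nat -> R -> R) (a b : R) (N : nat) :
  (forall k, ex_RInt (f k) a b) ->
  RInt (fun u => sum_f_R0 (fun k => f k u) N) a b = sum_f_R0 (fun k => RInt (f k) a b) N.
Proof.
  intros Hf.
  assert (Hex : forall N, ex_RInt (fun u => sum_f_R0 (fun k => f k u) N) a b).
  { intros M. induction M as [|M IH]; [apply Hf|].
    apply (ex_RInt_plus (V := R_NormedModule) (fun u => sum_f_R0 (fun k => f k u) M) (f (S M)));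
      [exact IH|apply Hf]. }
  induction N as [|N IH]; [reflexivity|]. simpl.
  rewrite (RInt_plus (fun u => sum_f_R0 (fun k => f k u) N) (f (S N))), IH by auto. reflexivity.
Qed.

Lemma is_derive_sum_f_R0 (f : nat -> R -> R) (df : nat -> R) (N : nat) (t : R) :
  (forall k, (k <= N)%nat -> is_derive (f k) t (df k)) ->
  is_derive (fun t => sum_f_R0 (fun k => f k t) N) t (sum_f_R0 df N).
Proof.
  induction N as [|N IH]; intros H; simpl; [apply H; lia|].
  apply (is_derive_plus (fun t => sum_f_R0 (fun k => f k t) N) (f (S N))).
  - apply IH. intros k Hk. apply H. lia.
  - apply H. lia.
Qed.

Lemma eq_of_same_derive (f g df : R -> R) (t0 : R) :
  (forall t, is_derive f t (df t)) -> (forall t, is_derive g t (df t)) ->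
  f t0 = g t0 -> forall t, f t = g t.
Proof.
  intros Hf Hg H0 t.
  assert (Hd : forall t, derivable_pt_lim (fun s => f s - g s) t 0).
  { intros s. replace 0 with (df s - df s) by ring.
    apply derivable_pt_lim_minus; apply is_derive_Reals; auto. }
  assert (pr : derivable (fun s => f s - g s)) by (intros s; exists 0; apply Hd).
  assert (Hc : constant (fun s => f s - g s)).
  { apply (null_derivative_1 _ pr). intros s. apply derive_pt_eq_0, Hd. }
  specialize (Hc t t0). simpl in Hc. lra.
Qed.

Lemma continuous_eq_0_left (g : R -> R) (a b : R) :
  a < b -> continuous g b -> (forall c, a < c < b -> g c = 0) -> g b = 0.
Proof.
  intros Hab Hg H0.
  destruct (Req_dec (g b) 0) as [|Hne]; [assumption|exfalso].
  apply continuity_pt_filterlim in Hg.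
  destruct (Hg (Rabs (g b)) (Rabs_pos_lt _ Hne)) as [d [Hd Hc]].
  set (c := b - Rmin d (b - a) / 2).
  assert (Hm : 0 < Rmin d (b - a)) by (apply Rmin_pos; lra).
  assert (Hmd : Rmin d (b - a) <= d) by apply Rmin_l.
  assert (Hmb : Rmin d (b - a) <= b - a) by apply Rmin_r.
  specialize (Hc c). simpl in Hc. unfold R_dist in Hc.
  rewrite H0 in Hc by (unfold c; lra).
  rewrite Rminus_0_l, Rabs_Ropp in Hc.
  assert (HD : D_x no_cond b c) by (split; [exact I|unfold c; lra]).
  assert (Hcb : Rabs (c - b) < d) by (unfold c; rewrite Rabs_left; lra).
  specialize (Hc (conj HD Hcb)). lra.
Qed.

Lemma RInt_derive_right_open (F f : R -> R) (a b : R) : a < b ->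
  (forall x, a <= x < b -> is_derive F x (f x)) -> (forall x, continuous f x) ->
  continuous F b -> RInt f a b = F b - F a.
Proof.
  intros Hab HF Hf HFb.
  assert (Hex : forall c, ex_RInt f a c) by (intros c; apply ex_RInt_continuous_R; auto).
  apply Rminus_diag_uniq.
  apply (continuous_eq_0_left (fun c => RInt f a c - (F c - F a)) a b Hab).
  - apply (continuous_minus (fun c => RInt f a c) (fun c => F c - F a)).
    + apply (continuous_RInt_1 f a b), filter_forall. intros c.
      apply (RInt_correct (V := R_CompleteNormedModule)), Hex.
    + apply (continuous_minus F (fun _ => F a)); [exact HFb|apply continuous_const].
  - intros c Hc. simpl. apply Rminus_diag_eq, is_RInt_unique.
    apply (is_RInt_derive F f); intros x Hx;
      rewrite Rmin_left, Rmax_right in Hx by lra; [apply HF; lra|apply Hf].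
Qed.

Lemma is_lim_seq_sub_div_INR (l C : R) : is_lim_seq (fun n => l - C / INR n) l.
Proof.
  assert (H : is_lim_seq (fun n => l - C * / INR n) (l - C * 0)).
  { apply (is_lim_seq_minus' (fun _ => l)); [apply is_lim_seq_const|].
    apply (is_lim_seq_scal_l (fun n => / INR n) C 0).
    exact (is_lim_seq_inv INR p_infty is_lim_seq_INR ltac:(discriminate)). }
  rewrite Rmult_0_r, Rminus_0_r in H. exact H.
Qed.

Lemma Riemann_of_is_RInt (f : R -> R) (a b v : R) : is_RInt f a b v -> Defs.is_RInt f a b v.
Proof.
  intros H. assert (Hex : ex_RInt f a b) by (exists v; exact H).
  exists (ex_RInt_Reals_0 f a b Hex). rewrite <- RInt_Reals. apply is_RInt_unique, H.
Qed.

Lemma is_RInt_of_Riemann (f : R -> R) (a b v : R) : Defs.is_RInt f a b v -> is_RInt f a b v.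
Proof.
  intros [pr <-]. rewrite <- RInt_Reals.
  apply (RInt_correct (V := R_CompleteNormedModule)), ex_RInt_Reals_1, pr.
Qed.

(** * Pochhammer symbols and the terminating series [hyp2F1_term] *)

Lemma poch_succ_l (a : R) (k : nat) : poch a (S k) = a * poch (a + 1) k.
Proof.
  revert a; induction k as [|k IH]; intros a; [simpl; ring|].
  change (poch a (S (S k))) with (poch a (S k) * (a + INR (S k))).
  rewrite IH, S_INR. simpl. ring.
Qed.

Lemma poch_opp_nat (n k : nat) : (n < k)%nat -> poch (- INR n) k = 0.
Proof.
  induction k as [|k IH]; intros Hk; [lia|]. simpl.
  destruct (Nat.eq_dec n k) as [->|Hne].
  - replace (- INR k + INR k) with 0 by ring. ring.
  - rewrite IH by lia. ring.
Qed.

Lemma poch_gt0 (a : R) (k : nat) : 0 < a -> 0 < poch a k.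
Proof.
  intros Ha; induction k as [|k IH]; simpl; [lra|].
  apply Rmult_lt_0_compat; [exact IH|]. pose proof (pos_INR k); lra.
Qed.

Lemma poch_reflect (d : R) (n : nat) : poch (1 - d - INR n) n = (-1) ^ n * poch d n.
Proof.
  induction n as [|n IH]; [simpl; ring|].
  rewrite poch_succ_l.
  replace (1 - d - INR (S n) + 1) with (1 - d - INR n) by (rewrite S_INR; ring).
  rewrite IH, S_INR. simpl. ring.
Qed.

Definition hyp2F1_coef (a b c : R) (k : nat) : R :=
  poch a k * poch b k / (poch c k * INR (Factorial.fact k)).

Lemma hyp2F1_term_0 (a b c : R) (N : nat) : hyp2F1_term a b c 0 N = 1.
Proof.
  induction N as [|N IH]; unfold hyp2F1_term in *; [simpl; field|].
  rewrite tech5, IH. simpl. ring.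
Qed.

Lemma is_derive_hyp2F1_term (a b c z : R) (m : nat) : 0 < c ->
  is_derive (fun z => hyp2F1_term a b c z (S m)) z
    (a * b / c * hyp2F1_term (a + 1) (b + 1) (c + 1) z m).
Proof.
  intros Hc. apply is_derive_Reals.
  pose proof (derivable_pt_lim_fs (hyp2F1_coef a b c) z (S m) ltac:(lia)) as H.
  simpl Init.Nat.pred in H.
  replace (a * b / c * hyp2F1_term (a + 1) (b + 1) (c + 1) z m) with
    (sum_f_R0 (fun k => INR (S k) * hyp2F1_coef a b c (S k) * z ^ k) m); [exact H|].
  unfold hyp2F1_term. rewrite scal_sum. apply sum_eq. intros k _.
  unfold hyp2F1_coef. rewrite !poch_succ_l, INR_fact_succ, S_INR.
  pose proof (poch_gt0 (c + 1) k ltac:(lra)). pose proof (INR_fact_lt_0 k). pose proof (pos_INR k).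
  field. repeat split; lra.
Qed.

Lemma is_derive_hyp2F1_term_comp (m : nat) (b c : R) (z : R -> R) (t dz : R) :
  0 < c -> is_derive z t dz ->
  is_derive (fun t => hyp2F1_term (- INR (S m)) b c (z t) (S m)) t
    (dz * (- INR (S m) * b / c) * hyp2F1_term (- INR m) (b + 1) (c + 1) (z t) m).
Proof.
  intros Hc Hz.
  pose proof (is_derive_comp (fun z => hyp2F1_term (- INR (S m)) b c z (S m)) z t _ _
                (is_derive_hyp2F1_term (- INR (S m)) b c (z t) m Hc) Hz) as H.
  replace (- INR (S m) + 1) with (- INR m) in H by (rewrite S_INR; ring).
  rewrite Rmult_assoc. exact H.
Qed.

Lemma continuous_hyp2F1_term_comp (a b c : R) (N : nat) (z : R -> R) (t : R) :
  0 < c -> continuous z t -> continuous (fun t => hyp2F1_term a b c (z t) N) t.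
Proof.
  intros Hc Hz. destruct N as [|m].
  - apply (continuous_ext (fun _ => 1)); [|apply continuous_const].
    intros y. unfold hyp2F1_term. simpl. field.
  - apply (continuous_comp_R z (fun z => hyp2F1_term a b c z (S m)) t Hz).
    apply ex_derive_continuous_R. eexists. apply is_derive_hyp2F1_term, Hc.
Qed.

(* Contiguity in the numerator parameter [- n], coefficientwise from
   (-n-1)_(k+1) = (-n)_(k+1) - (k+1) (-n)_k. *)
Lemma hyp2F1_term_1_succ (n : nat) (b c : R) : 0 < c ->
  hyp2F1_term (- INR (S n)) b c 1 (S n) =
  hyp2F1_term (- INR n) b c 1 n - b / c * hyp2F1_term (- INR n) (b + 1) (c + 1) 1 n.
Proof.
  intros Hc. unfold hyp2F1_term.
  rewrite (sum_eq _ (fun k => hyp2F1_coef (- INR n) b c k * 1 ^ k -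
     match k with O => 0 | S j => b / c * (hyp2F1_coef (- INR n) (b + 1) (c + 1) j * 1 ^ j) end)).
  2:{ intros [|j] _; unfold hyp2F1_coef; [simpl; field|].
      rewrite (poch_succ_l (- INR (S n)) j), (poch_succ_l b j), (poch_succ_l c j), INR_fact_succ.
      change (poch (- INR n) (S j)) with (poch (- INR n) j * (- INR n + INR j)).
      replace (- INR (S n) + 1) with (- INR n) by (rewrite S_INR; ring).
      pose proof (poch_gt0 (c + 1) j ltac:(lra)). pose proof (INR_fact_lt_0 j). pose proof (pos_INR j).
      rewrite !pow1, !S_INR. field. repeat split; lra. }
  rewrite minus_sum, sum_f_R0_shift, tech5, scal_sum.
  unfold hyp2F1_coef at 2. rewrite (poch_opp_nat n (S n)) by lia.
  replace (0 * poch b (S n) / (poch c (S n) * INR (Factorial.fact (S n))) * 1 ^ S n) with 0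
    by (unfold Rdiv; ring).
  rewrite Rplus_0_r. unfold hyp2F1_coef. f_equal. apply sum_eq. intros k _. ring.
Qed.

Lemma hyp2F1_term_chu_vandermonde (n : nat) : forall b c, 0 < c ->
  hyp2F1_term (- INR n) b c 1 n = poch (c - b) n / poch c n.
Proof.
  induction n as [|n IH]; intros b c Hc; [unfold hyp2F1_term; simpl; field|].
  rewrite hyp2F1_term_1_succ, (IH b c Hc), (IH (b + 1) (c + 1)) by lra.
  replace (c + 1 - (b + 1)) with (c - b) by ring.
  assert (E : poch (c + 1) n = poch c n * (c + INR n) / c).
  { pose proof (poch_succ_l c n) as E. simpl in E. rewrite E. field. lra. }
  rewrite E. simpl.
  pose proof (poch_gt0 c n Hc). pose proof (pos_INR n).
  field. repeat split; lra.
Qed.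

Lemma hyp2F1_term_1_reflect (n : nat) (lam : R) : 0 <= lam ->
  (-1) ^ n * hyp2F1_term (- INR n) (INR n + 2 * lam + 1) (lam + 3/2) 1 n
  = (lam + 1/2) / (lam + INR n + 1/2).
Proof.
  intros Hl. rewrite hyp2F1_term_chu_vandermonde by lra.
  replace (lam + 3/2 - (INR n + 2 * lam + 1)) with (1 - (lam + 1/2) - INR n) by lra.
  rewrite poch_reflect.
  pose proof (poch_succ_l (lam + 1/2) n) as E. simpl in E.
  replace (lam + 1/2 + 1) with (lam + 3/2) in E by lra.
  pose proof (poch_gt0 (lam + 3/2) n ltac:(lra)). pose proof (pos_INR n).
  transitivity ((-1) ^ n * (-1) ^ n * (poch (lam + 1/2) n / poch (lam + 3/2) n)); [unfold Rdiv; ring|].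
  rewrite pow_m1_sqr. apply (Rmult_eq_reg_r (poch (lam + 3/2) n * (lam + INR n + 1/2))); [|nra].
  transitivity (poch (lam + 1/2) n * (lam + 1/2 + INR n)); [field; lra|].
  rewrite E. field. lra.
Qed.

Lemma hyp2F1_term_reflect (n : nat) : forall lam y, 0 <= lam ->
  (-1) ^ n * hyp2F1_term (- INR n) (INR n + 2 * lam + 1) (lam + 3/2) (1 - y) n =
  (lam + 1/2) / (lam + INR n + 1/2) * hyp2F1_term (- INR n) (INR n + 2 * lam + 1) (lam + 1/2) y n.
Proof.
  induction n as [|m IH]; intros lam y Hl; [unfold hyp2F1_term; simpl; field; lra|].
  pose proof (pos_INR m) as Hm.
  set (b := INR (S m) + 2 * lam + 1).
  assert (Hb : b + 1 = INR m + 2 * (lam + 1) + 1) by (unfold b; rewrite S_INR; ring).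
  set (E := fun y => hyp2F1_term (- INR m) (b + 1) (lam + 1/2 + 1) y m).
  revert y.
  apply (eq_of_same_derive
           (fun y => (-1) ^ S m * hyp2F1_term (- INR (S m)) b (lam + 3/2) (1 - y) (S m))
           (fun y => (lam + 1/2) / (lam + INR (S m) + 1/2) * hyp2F1_term (- INR (S m)) b (lam + 1/2) y (S m))
           (fun y => (lam + 1/2) / (lam + INR (S m) + 1/2) * (1 * (- INR (S m) * b / (lam + 1/2)) * E y))
           0).
  - intros y.
    replace ((lam + 1/2) / (lam + INR (S m) + 1/2) * (1 * (- INR (S m) * b / (lam + 1/2)) * E y))
      with ((-1) ^ S m * (-1 * (- INR (S m) * b / (lam + 3/2))
                           * hyp2F1_term (- INR m) (b + 1) (lam + 3/2 + 1) (1 - y) m)).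
    + apply (is_derive_scal (fun y => hyp2F1_term (- INR (S m)) b (lam + 3/2) (1 - y) (S m))).
      apply (is_derive_hyp2F1_term_comp m b (lam + 3/2) (fun y => 1 - y)); [lra|].
      auto_derive; [exact I|ring].
    + pose proof (IH (lam + 1) y ltac:(lra)) as HIH. rewrite <- Hb in HIH.
      replace (lam + 1 + 3/2) with (lam + 3/2 + 1) in HIH by ring.
      replace (lam + 1 + 1/2) with (lam + 1/2 + 1) in HIH by ring.
      fold (E y) in HIH. rewrite S_INR.
      transitivity (- ((INR m + 1) * b / (lam + 3/2)) *
                    ((-1) ^ m * hyp2F1_term (- INR m) (b + 1) (lam + 3/2 + 1) (1 - y) m));
        [simpl; field; lra|].
      rewrite HIH. field. lra.
  - intros y. apply (is_derive_scal (fun y => hyp2F1_term (- INR (S m)) b (lam + 1/2) y (S m))).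
    apply (is_derive_hyp2F1_term_comp m b (lam + 1/2) (fun y => y)); [lra|].
    auto_derive; [exact I|ring].
  - unfold b. rewrite Rminus_0_r, hyp2F1_term_0, hyp2F1_term_1_reflect by exact Hl. ring.
Qed.

(** * Gegenbauer polynomials as terminating [2F1] *)

(* The [k]-th summand of [gegenbauer], set to zero for [2 k > n] so that the sum
   may run over any range [N >= n / 2]. *)
Definition gegenbauer_term (mu : R) (n k : nat) (t : R) : R :=
  if Nat.leb (2 * k) n then
    (-1) ^ k * poch mu (n - k) / (INR (Factorial.fact k) * INR (Factorial.fact (n - 2 * k)))
      * (2 * t) ^ (n - 2 * k)
  else 0.

Lemma gegenbauer_term_in (mu : R) (k r : nat) (t : R) :
  gegenbauer_term mu (2 * k + r) k t =
  (-1) ^ k * poch mu (k + r) / (INR (Factorial.fact k) * INR (Factorial.fact r)) * (2 * t) ^ r.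
Proof.
  unfold gegenbauer_term. rewrite (proj2 (Nat.leb_le _ _)) by lia.
  replace (2 * k + r - k)%nat with (k + r)%nat by lia.
  replace (2 * k + r - 2 * k)%nat with r by lia. reflexivity.
Qed.

Lemma gegenbauer_term_out (mu : R) (n k : nat) (t : R) :
  (n < 2 * k)%nat -> gegenbauer_term mu n k t = 0.
Proof. intros H. unfold gegenbauer_term. rewrite (proj2 (Nat.leb_gt _ _)) by lia. reflexivity. Qed.

Lemma div2_bounds (n : nat) : (2 * Nat.div2 n <= n < 2 * Nat.div2 n + 2)%nat.
Proof. pose proof (Nat.div2_odd n). destruct (Nat.odd n); simpl in H; lia. Qed.

Lemma gegenbauer_sum (mu : R) (n N : nat) (t : R) : (Nat.div2 n <= N)%nat ->
  gegenbauer mu n t = sum_f_R0 (fun k => gegenbauer_term mu n k t) N.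
Proof.
  intros H. pose proof (div2_bounds n).
  induction H as [|N HN IH].
  - apply sum_eq. intros k Hk. unfold gegenbauer_term.
    rewrite (proj2 (Nat.leb_le _ _)) by lia. reflexivity.
  - rewrite tech5, <- IH, gegenbauer_term_out by lia. ring.
Qed.

(* The termwise form at [t = 1] of n C^mu_n(t) = 2 mu (t C^(mu+1)_(n-1)(t) - C^(mu+1)_(n-2)(t)). *)
Lemma gegenbauer_term_rec_1 (mu : R) (m k : nat) :
  INR (S (S m)) * gegenbauer_term mu (S (S m)) k 1 =
  2 * mu * (gegenbauer_term (mu + 1) (S m) k 1
            - match k with O => 0 | S j => gegenbauer_term (mu + 1) m j 1 end).
Proof.
  destruct k as [|j].
  - rewrite (gegenbauer_term_in mu 0 (S (S m)) 1 : gegenbauer_term mu (S (S m)) 0 1 = _),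
      (gegenbauer_term_in (mu + 1) 0 (S m) 1 : gegenbauer_term (mu + 1) (S m) 0 1 = _).
    rewrite !Nat.add_0_l, poch_succ_l, INR_fact_succ.
    rewrite <- (tech_pow_Rmult _ (S m)), S_INR.
    change (INR (Factorial.fact 0)) with 1.
    pose proof (INR_fact_lt_0 (S m)). pose proof (pos_INR (S m)). field. lra.
  - destruct (Compare_dec.lt_eq_lt_dec m (2 * j)) as [[Hlt| ->]|Hgt].
    + rewrite !gegenbauer_term_out by lia. ring.
    + rewrite (gegenbauer_term_out (mu + 1) (S (2 * j))) by lia.
      replace (S (S (2 * j))) with (2 * S j + 0)%nat by lia.
      rewrite <- (Nat.add_0_r (2 * j)), !gegenbauer_term_in.
      rewrite !Nat.add_0_r, poch_succ_l, INR_fact_succ, mult_INR, <- tech_pow_Rmult, !pow_O.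
      change (INR (Factorial.fact 0)) with 1. change (INR 2) with 2.
      pose proof (INR_fact_lt_0 j). pose proof (pos_INR j). rewrite S_INR. field. lra.
    + destruct (Nat.le_exists_sub (S (2 * j)) m ltac:(lia)) as [r [-> _]].
      replace (S (S (r + S (2 * j)))) with (2 * S j + S r)%nat by lia.
      replace (S (r + S (2 * j))) with (2 * S j + r)%nat by lia.
      replace (r + S (2 * j))%nat with (2 * j + S r)%nat by lia.
      rewrite !gegenbauer_term_in.
      replace (S j + S r)%nat with (S (j + S r)) by lia.
      replace (S j + r)%nat with (j + S r)%nat by lia.
      rewrite poch_succ_l, !INR_fact_succ.
      pose proof (INR_fact_lt_0 j). pose proof (INR_fact_lt_0 r).
      pose proof (pos_INR j). pose proof (pos_INR r).
      rewrite plus_INR, mult_INR, !S_INR. simpl. field. lra.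
Qed.

Lemma gegenbauer_1 (n : nat) : forall mu,
  gegenbauer mu n 1 = poch (2 * mu) n / INR (Factorial.fact n).
Proof.
  induction n as [n IH] using Wf_nat.lt_wf_ind. intros mu.
  destruct n as [|[|m]]; [unfold gegenbauer; simpl; field ..|].
  pose proof (div2_bounds (S (S m))). pose proof (div2_bounds (S m)). pose proof (div2_bounds m).
  assert (Hrec : INR (S (S m)) * gegenbauer mu (S (S m)) 1 =
                 2 * mu * (gegenbauer (mu + 1) (S m) 1 - gegenbauer (mu + 1) m 1)).
  { rewrite (gegenbauer_sum mu (S (S m)) (S (S m))), (gegenbauer_sum (mu + 1) (S m) (S (S m))),
      (gegenbauer_sum (mu + 1) m (S m)) by lia.
    rewrite <- (sum_f_R0_shift (fun k => gegenbauer_term (mu + 1) m k 1) (S m)).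
    rewrite scal_sum, <- minus_sum, scal_sum.
    apply sum_eq. intros k _. rewrite Rmult_comm, gegenbauer_term_rec_1. ring. }
  rewrite (IH (S m)), (IH m) in Hrec by lia.
  assert (Hn : 0 < INR (S (S m))) by (apply lt_0_INR; lia).
  apply (Rmult_eq_reg_l (INR (S (S m)))); [rewrite Hrec|lra].
  rewrite (poch_succ_l (2 * mu) (S m)), (poch_succ_l (2 * mu + 1) m).
  change (poch (2 * (mu + 1)) (S m)) with (poch (2 * (mu + 1)) m * (2 * (mu + 1) + INR m)).
  replace (2 * mu + 1 + 1) with (2 * (mu + 1)) by ring.
  rewrite (INR_fact_succ (S m)), (INR_fact_succ m).
  pose proof (INR_fact_lt_0 m). pose proof (pos_INR m).
  rewrite !S_INR. field. lra.
Qed.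

Lemma is_derive_gegenbauer_term (mu : R) (m k : nat) (t : R) :
  is_derive (gegenbauer_term mu (S m) k) t (2 * mu * gegenbauer_term (mu + 1) m k t).
Proof.
  destruct (Compare_dec.le_lt_dec (2 * k) m) as [Hle|Hgt].
  - destruct (Nat.le_exists_sub (2 * k) m Hle) as [r [-> _]].
    replace (S (r + 2 * k)) with (2 * k + S r)%nat by lia.
    replace (r + 2 * k)%nat with (2 * k + r)%nat by lia.
    rewrite gegenbauer_term_in.
    apply (is_derive_ext (fun t => (-1) ^ k * poch mu (k + S r)
                                   / (INR (Factorial.fact k) * INR (Factorial.fact (S r)))
                                   * (2 * t) ^ S r)).
    { intros s. symmetry. apply gegenbauer_term_in. }
    replace (k + S r)%nat with (S (k + r)) by lia.
    rewrite poch_succ_l, INR_fact_succ.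
    pose proof (INR_fact_lt_0 k). pose proof (INR_fact_lt_0 r). pose proof (pos_INR r).
    auto_derive; [exact I|].
    change (match r with 0%nat => 1 | S _ => INR r + 1 end) with (INR (S r)).
    rewrite S_INR. field. lra.
  - rewrite (gegenbauer_term_out (mu + 1)), Rmult_0_r by lia.
    destruct (Nat.eq_dec (2 * k) (S m)) as [Heq|Hne].
    + apply (is_derive_ext (fun _ => (-1) ^ k * poch mu (S m - k) / (INR (Factorial.fact k) * INR 1))).
      { intros s. unfold gegenbauer_term. rewrite (proj2 (Nat.leb_le _ _)), <- Heq, Nat.sub_diag by lia.
        simpl. ring. }
      auto_derive; [exact I|ring].
    + apply (is_derive_ext (fun _ => 0)); [intros s; rewrite gegenbauer_term_out by lia; reflexivity|].
      auto_derive; [exact I|ring].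
Qed.

Lemma is_derive_gegenbauer (mu : R) (m : nat) (t : R) :
  is_derive (gegenbauer mu (S m)) t (2 * mu * gegenbauer (mu + 1) m t).
Proof.
  pose proof (div2_bounds (S m)). pose proof (div2_bounds m).
  apply (is_derive_ext (fun t => sum_f_R0 (fun k => gegenbauer_term mu (S m) k t) (S m))).
  { intros s. symmetry. apply gegenbauer_sum. lia. }
  rewrite (gegenbauer_sum (mu + 1) m (S m) t), scal_sum by lia.
  apply is_derive_sum_f_R0. intros k _. rewrite Rmult_comm. apply is_derive_gegenbauer_term.
Qed.

Lemma gegenbauer_opp (mu : R) (n : nat) (t : R) :
  gegenbauer mu n (- t) = (-1) ^ n * gegenbauer mu n t.
Proof.
  unfold gegenbauer. rewrite scal_sum. apply sum_eq. intros i Hi.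
  pose proof (div2_bounds n).
  replace (2 * - t) with (-1 * (2 * t)) by ring.
  rewrite Rpow_mult_distr.
  replace ((-1) ^ n) with ((-1) ^ (n - 2 * i) * (-1) ^ (2 * i))
    by (rewrite <- pow_add; f_equal; lia).
  rewrite pow_1_even. ring.
Qed.

Lemma gegenbauer_hyp2F1 (n : nat) : forall mu t, 0 < mu ->
  gegenbauer mu n t = poch (2 * mu) n / INR (Factorial.fact n) *
    hyp2F1_term (- INR n) (INR n + 2 * mu) (mu + 1/2) ((1 - t) / 2) n.
Proof.
  induction n as [|m IH]; intros mu t Hmu; [unfold gegenbauer, hyp2F1_term; simpl; field|].
  revert t.
  apply (eq_of_same_derive _ _ (fun t => 2 * mu * gegenbauer (mu + 1) m t) 1).
  - intros t. apply is_derive_gegenbauer.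
  - intros t. rewrite (IH (mu + 1) t) by lra.
    replace (2 * mu * (poch (2 * (mu + 1)) m / INR (Factorial.fact m) *
               hyp2F1_term (- INR m) (INR m + 2 * (mu + 1)) (mu + 1 + 1/2) ((1 - t) / 2) m))
      with (poch (2 * mu) (S m) / INR (Factorial.fact (S m)) *
            (-1/2 * (- INR (S m) * (INR (S m) + 2 * mu) / (mu + 1/2)) *
             hyp2F1_term (- INR m) (INR (S m) + 2 * mu + 1) (mu + 1/2 + 1) ((1 - t) / 2) m)).
    { apply (is_derive_scal
               (fun t => hyp2F1_term (- INR (S m)) (INR (S m) + 2 * mu) (mu + 1/2) ((1 - t) / 2) (S m))).
      apply (is_derive_hyp2F1_term_comp m _ _ (fun t => (1 - t) / 2)); [lra|].
      auto_derive; [exact I|field]. }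
    replace (INR (S m) + 2 * mu + 1) with (INR m + 2 * (mu + 1)) by (rewrite S_INR; ring).
    replace (mu + 1/2 + 1) with (mu + 1 + 1/2) by lra.
    assert (E : poch (2 * (mu + 1)) m = poch (2 * mu + 1) m * (2 * mu + 1 + INR m) / (2 * mu + 1)).
    { pose proof (poch_succ_l (2 * mu + 1) m) as E. simpl in E.
      replace (2 * mu + 1 + 1) with (2 * (mu + 1)) in E by ring.
      rewrite E. field. lra. }
    rewrite E, (poch_succ_l (2 * mu) m), INR_fact_succ, S_INR.
    pose proof (INR_fact_lt_0 m). pose proof (pos_INR m).
    field. repeat split; lra.
  - rewrite gegenbauer_1. replace ((1 - 1) / 2) with 0 by field. rewrite hyp2F1_term_0. ring.
Qed.

Lemma gegenbauer_opp_hyp2F1 (lam : R) (n : nat) (t : R) : 0 <= lam ->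
  gegenbauer (lam + 1/2) n (- t) = poch (2 * lam + 1) n / INR (Factorial.fact n)
    * hyp2F1_term (- INR n) (INR n + 2 * lam + 1) (lam + 1) ((1 + t) / 2) n.
Proof.
  intros Hl. rewrite gegenbauer_hyp2F1 by lra.
  replace (2 * (lam + 1/2)) with (2 * lam + 1) by field.
  replace (lam + 1/2 + 1/2) with (lam + 1) by field.
  replace ((1 - - t) / 2) with ((1 + t) / 2) by field.
  rewrite Rplus_assoc. reflexivity.
Qed.

(** * Real powers of the positive part *)

Lemma rpow_Rpower (z a : R) : 0 < z -> rpow z a = Rpower z a.
Proof. intros H. unfold rpow. destruct (Req_EM_T z 0); [lra|reflexivity]. Qed.

Lemma rpow_0_l (a : R) : a <> 0 -> rpow 0 a = 0.
Proof.
  intros H. unfold rpow. destruct (Req_EM_T 0 0); [|lra].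
  destruct (Req_EM_T a 0); [lra|reflexivity].
Qed.

Lemma rpow_0_r (z : R) : rpow z 0 = 1.
Proof.
  unfold rpow. destruct (Req_EM_T z 0); [destruct (Req_EM_T 0 0); [reflexivity|lra]|].
  unfold Rpower. rewrite Rmult_0_l. apply exp_0.
Qed.

Lemma rpow_ge0 (z a : R) : 0 <= z -> 0 <= rpow z a.
Proof.
  intros H. unfold rpow. destruct (Req_EM_T z 0); [destruct (Req_EM_T a 0); lra|].
  left; apply exp_pos.
Qed.

(* [y_+ ^ a]: extending [1 - u ^ 2] and [1 + t] by zero past their roots keeps
   the integrands below continuous on all of [R]. *)
Definition pospow (a y : R) : R := rpow (Rmax y 0) a.

Lemma pospow_pos (a y : R) : 0 < y -> pospow a y = Rpower y a.
Proof. intros H. unfold pospow. rewrite Rmax_left by lra. apply rpow_Rpower, H. Qed.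

Lemma pospow_nonpos (a y : R) : y <= 0 -> pospow a y = rpow 0 a.
Proof. intros H. unfold pospow. rewrite Rmax_right by lra. reflexivity. Qed.

Lemma pospow_0_r (y : R) : pospow 0 y = 1.
Proof. apply rpow_0_r. Qed.

Lemma pospow_ge0 (a y : R) : 0 <= pospow a y.
Proof. apply rpow_ge0, Rmax_r. Qed.

Lemma pospow_antimono (a b y : R) : 0 <= a <= b -> y <= 1 -> pospow b y <= pospow a y.
Proof.
  intros Hab Hy. destruct (Rle_lt_dec y 0) as [H|H].
  - rewrite !pospow_nonpos by exact H.
    destruct (Req_EM_T b 0) as [->|Hb]; [replace a with 0 by lra; lra|].
    rewrite rpow_0_l by exact Hb. apply rpow_ge0; lra.
  - rewrite !pospow_pos by exact H. unfold Rpower.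
    assert (ln y <= 0) by (rewrite <- ln_1; apply ln_le; lra).
    apply exp_le_compat. nra.
Qed.

Lemma pospow_mul_pow (a y : R) (k : nat) :
  0 <= a -> 0 <= y -> pospow a y * y ^ k = pospow (a + INR k) y.
Proof.
  intros Ha [Hy| <-].
  - rewrite !pospow_pos, <- (Rpower_pow k y), <- Rpower_plus by exact Hy. reflexivity.
  - destruct k as [|k]; [simpl; rewrite Rplus_0_r; ring|].
    assert (Hk : a + INR (S k) <> 0) by (rewrite S_INR; pose proof (pos_INR k); lra).
    rewrite pow_i, !pospow_nonpos, (rpow_0_l _ Hk) by (lia || lra). ring.
Qed.

Lemma pospow_add1 (a y : R) : 0 <= a -> 0 <= y -> pospow (a + 1) y = pospow a y * y.
Proof.
  intros Ha Hy. pose proof (pospow_mul_pow a y 1 Ha Hy) as E.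
  rewrite pow_1 in E. change (INR 1) with 1 in E. symmetry. exact E.
Qed.

Lemma pospow_mul (a h y : R) : 0 < h -> 0 <= y -> pospow a (h * y) = Rpower h a * pospow a y.
Proof.
  intros Hh [Hy| <-].
  - rewrite !pospow_pos, Rpower_mult_distr by (try apply Rmult_lt_0_compat; lra). reflexivity.
  - rewrite Rmult_0_r, !pospow_nonpos by lra.
    destruct (Req_EM_T a 0) as [->|Ha].
    + rewrite rpow_0_r, Rpower_O by lra. ring.
    + rewrite rpow_0_l by exact Ha. ring.
Qed.

Lemma pospow_half (y : R) : 0 <= y -> pospow (1/2) y = sqrt y.
Proof.
  intros [Hy| <-].
  - rewrite pospow_pos by exact Hy. replace (1/2) with (/2) by field. apply Rpower_sqrt, Hy.
  - rewrite pospow_nonpos, rpow_0_l, sqrt_0 by lra. reflexivity.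
Qed.

Lemma continuous_pospow (a : R) : 0 <= a -> forall y, continuous (pospow a) y.
Proof.
  intros Ha y. destruct (Req_EM_T a 0) as [->|Ha0].
  { apply (continuous_ext (fun _ => 1)); [intros; rewrite pospow_0_r; reflexivity|].
    apply continuous_const. }
  destruct (Rtotal_order y 0) as [Hlt|[->|Hgt]].
  - apply (continuous_ext_loc _ (fun _ => 0)); [|apply continuous_const].
    assert (Hp : 0 < - y) by lra. exists (mkposreal _ Hp). intros z Hz.
    change (Rabs (z - y) < - y) in Hz. apply Rabs_lt_between in Hz.
    rewrite pospow_nonpos, rpow_0_l by lra. reflexivity.
  - apply continuity_pt_filterlim.
    intros eps Heps. exists (exp (ln eps / a)). split; [apply exp_pos|].
    intros x [_ Hx]. simpl in Hx |- *. unfold R_dist in Hx |- *.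
    rewrite Rminus_0_r in Hx. rewrite (pospow_nonpos a 0), rpow_0_l, Rminus_0_r by lra.
    destruct (Rle_lt_dec x 0) as [Hx0|Hx0].
    + rewrite pospow_nonpos, rpow_0_l, Rabs_R0 by lra. exact Heps.
    + rewrite pospow_pos by exact Hx0. unfold Rpower.
      rewrite Rabs_pos_eq by (left; apply exp_pos). rewrite Rabs_pos_eq in Hx by lra.
      assert (H1 : ln x < ln eps / a) by (rewrite <- (ln_exp (ln eps / a)); apply ln_increasing; lra).
      rewrite <- (exp_ln eps) by exact Heps. apply exp_increasing.
      apply (Rmult_lt_compat_l a) in H1; [|lra].
      replace (a * (ln eps / a)) with (ln eps) in H1 by (field; lra). exact H1.
  - apply (continuous_ext_loc _ (fun z => Rpower z a)).
    + exists (mkposreal _ Hgt). intros z Hz.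
      change (Rabs (z - y) < y) in Hz. apply Rabs_lt_between in Hz.
      rewrite pospow_pos by lra. reflexivity.
    + apply ex_derive_continuous_R. exists (a * Rpower y (a - 1)).
      apply is_derive_Reals, derivable_pt_lim_power, Hgt.
Qed.

Lemma is_derive_pospow (a y : R) : 0 < y -> is_derive (pospow (a + 1)) y ((a + 1) * pospow a y).
Proof.
  intros Hy. apply (is_derive_ext_loc (fun z => Rpower z (a + 1))).
  - exists (mkposreal _ Hy). intros z Hz.
    change (Rabs (z - y) < y) in Hz. apply Rabs_lt_between in Hz.
    rewrite pospow_pos by lra. reflexivity.
  - rewrite pospow_pos by exact Hy. replace a with (a + 1 - 1) at 2 by ring.
    apply is_derive_Reals, derivable_pt_lim_power, Hy.
Qed.

(** * The Wallis integral *)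

Definition wallis (a : R) : R := RInt (fun u => 2 * pospow a (1 - u ^ 2)) 0 1.

Lemma continuous_pospow_1_sqr (a u : R) : 0 <= a -> continuous (fun u => pospow a (1 - u ^ 2)) u.
Proof.
  intros Ha. apply (continuous_comp_R (fun u => 1 - u ^ 2) (pospow a)).
  - apply ex_derive_continuous_R. auto_derive. exact I.
  - apply continuous_pospow, Ha.
Qed.

Lemma ex_RInt_wallis (a x y : R) : 0 <= a -> ex_RInt (fun u => 2 * pospow a (1 - u ^ 2)) x y.
Proof.
  intros Ha. apply ex_RInt_continuous_R. intros u _.
  apply continuous_mult_R; [apply continuous_const|apply continuous_pospow_1_sqr, Ha].
Qed.

Lemma wallis_ge0 (a : R) : 0 <= a -> 0 <= wallis a.
Proof.
  intros Ha. apply RInt_ge_0; [lra|apply ex_RInt_wallis, Ha|].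
  intros u _. pose proof (pospow_ge0 a (1 - u ^ 2)). lra.
Qed.

Lemma wallis_antimono (a b : R) : 0 <= a <= b -> wallis b <= wallis a.
Proof.
  intros Hab. apply RInt_le; [lra|apply ex_RInt_wallis; lra ..|].
  intros u Hu. pose proof (pospow_antimono a b (1 - u ^ 2) Hab). nra.
Qed.

Lemma wallis_0 : wallis 0 = 2.
Proof.
  unfold wallis. rewrite (RInt_ext_R _ (fun _ => 2)), RInt_const.
  - unfold scal; simpl. unfold mult; simpl. ring.
  - intros u _. rewrite pospow_0_r. ring.
Qed.

Lemma wallis_half : wallis (1/2) = PI / 2.
Proof.
  unfold wallis. pose proof PI2_RGT_0.
  rewrite (RInt_ext_R _ (fun u => 2 * sqrt (1 - u ^ 2))).
  2:{ intros u Hu. rewrite Rmin_left, Rmax_right in Hu by lra. rewrite pospow_half by nra. reflexivity. }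
  replace (RInt (fun u => 2 * sqrt (1 - u ^ 2)) 0 1)
    with (RInt (fun u => 2 * sqrt (1 - u ^ 2)) (sin 0) (sin (PI / 2)))
    by (rewrite sin_0, sin_PI2; reflexivity).
  rewrite <- (RInt_comp (fun u => 2 * sqrt (1 - u ^ 2)) sin cos).
  - apply is_RInt_unique.
    apply (is_RInt_ext_R (fun t => 2 * cos t ^ 2)).
    { intros t Ht. rewrite Rmin_left, Rmax_right in Ht by lra.
      change (scal (cos t) (2 * sqrt (1 - sin t ^ 2))) with (cos t * (2 * sqrt (1 - sin t ^ 2))).
      replace (1 - sin t ^ 2) with (cos t ^ 2) by (pose proof (sin2_cos2 t); unfold Rsqr in *; simpl; lra).
      rewrite sqrt_pow2 by (apply cos_ge_0; lra). ring. }
    assert (E : (fun t => t + sin t * cos t) (PI / 2) - (fun t => t + sin t * cos t) 0 = PI / 2)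
      by (simpl; rewrite sin_PI2, cos_PI2, sin_0, cos_0; ring).
    rewrite <- E at 2.
    apply (is_RInt_derive (fun t => t + sin t * cos t)); intros t _.
    + auto_derive; [exact I|]. pose proof (sin2_cos2 t). unfold Rsqr in *. nra.
    + apply ex_derive_continuous_R. auto_derive. exact I.
  - intros t _. apply continuous_mult_R; [apply continuous_const|].
    apply (continuous_comp_R (fun u => 1 - u ^ 2) sqrt); [apply ex_derive_continuous_R; auto_derive; exact I|].
    apply continuity_pt_filterlim, continuity_pt_sqrt.
    pose proof (sin2_cos2 t). pose proof (pow2_ge_0 (cos t)). unfold Rsqr in *. simpl in *. nra.
  - intros t _. split; [apply is_derive_Reals, derivable_pt_lim_sin|].
    apply ex_derive_continuous_R. auto_derive. exact I.
Qed.

(* Integration by parts against [d/du (u (1 - u^2)^(a+1))]; this derivative may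
   not exist at [u = 1] (for [a = 0]), hence [RInt_derive_right_open]. *)
Lemma wallis_succ (a : R) : 0 <= a -> wallis (a + 1) * (a + 3/2) = (a + 1) * wallis a.
Proof.
  intros Ha.
  set (Phi := fun u => (2 * a + 3) * pospow (a + 1) (1 - u ^ 2) - 2 * (a + 1) * pospow a (1 - u ^ 2)).
  assert (HPhi : RInt Phi 0 1 = (a + 3/2) * wallis (a + 1) - (a + 1) * wallis a).
  { unfold wallis.
    rewrite <- (RInt_scal_R _ 0 1 (a + 3/2)), <- (RInt_scal_R _ 0 1 (a + 1)) by (apply ex_RInt_wallis; lra).
    rewrite <- RInt_minus_R by (apply ex_RInt_scal_R, ex_RInt_wallis; lra).
    apply RInt_ext_R. intros u _. unfold Phi. field. }
  rewrite (RInt_derive_right_open (fun u => u * pospow (a + 1) (1 - u ^ 2))) in HPhi.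
  - replace (1 - 1 ^ 2) with 0 in HPhi by ring.
    rewrite pospow_nonpos, rpow_0_l in HPhi by lra. lra.
  - lra.
  - intros u Hu.
    assert (Hy : 0 < 1 - u ^ 2) by nra.
    replace (Phi u) with (1 * pospow (a + 1) (1 - u ^ 2) + u * (-2 * u * ((a + 1) * pospow a (1 - u ^ 2))))
      by (unfold Phi; rewrite (pospow_add1 a) by lra; ring).
    apply (is_derive_mult (K := R_AbsRing) (fun u => u) (fun u => pospow (a + 1) (1 - u ^ 2)));
      [auto_derive; [exact I|ring]| |intros; apply Rmult_comm].
    apply (is_derive_comp (pospow (a + 1)) (fun u => 1 - u ^ 2)); [apply is_derive_pospow, Hy|].
    auto_derive; [exact I|ring].
  - intros u. unfold Phi.
    apply (continuous_minus (fun u => (2 * a + 3) * pospow (a + 1) (1 - u ^ 2))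
                            (fun u => 2 * (a + 1) * pospow a (1 - u ^ 2)));
      apply continuous_mult_R; try apply continuous_const; apply continuous_pospow_1_sqr; lra.
  - apply continuous_mult_R; [apply continuous_id|apply continuous_pospow_1_sqr; lra].
Qed.

Lemma wallis_poch (lam : R) (k : nat) : 0 <= lam ->
  wallis (lam + INR k) * poch (lam + 3/2) k = wallis lam * poch (lam + 1) k.
Proof.
  intros Hl. induction k as [|k IH]; [simpl; rewrite Rplus_0_r; ring|].
  simpl poch. pose proof (pos_INR k).
  pose proof (wallis_succ (lam + INR k) ltac:(lra)) as E.
  replace (lam + INR k + 1) with (lam + INR (S k)) in E by (rewrite S_INR; ring).
  transitivity (wallis (lam + INR (S k)) * (lam + INR k + 3/2) * poch (lam + 3/2) k); [lra|].
  rewrite E, Rmult_assoc, IH, S_INR. ring.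
Qed.

(* [(a + 1) wallis a * wallis (a + 1/2)] is invariant under [a -> a + 1/2]. *)
Lemma wallis_prod_half_nat (m : nat) :
  (INR m / 2 + 1) * wallis (INR m / 2) * wallis (INR m / 2 + 1/2) = PI.
Proof.
  induction m as [|m IH].
  - replace (INR 0 / 2) with 0 by (simpl; field).
    rewrite !Rplus_0_l, wallis_0, wallis_half. field.
  - replace (INR (S m) / 2) with (INR m / 2 + 1/2) by (rewrite S_INR; field).
    replace (INR m / 2 + 1/2 + 1/2) with (INR m / 2 + 1) by field.
    pose proof (pos_INR m).
    rewrite <- IH, <- (wallis_succ (INR m / 2)) by lra. field.
Qed.

(* Squeeze [wallis N ^ 2] between two products of [wallis_prod_half_nat] at the grid
   points around [N], using that [wallis] is nonincreasing. *)
Lemma wallis_sqr_bounds (N : R) : 1/2 <= N -> PI / (N + 3/2) <= wallis N ^ 2 <= PI / N.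
Proof.
  intros HN.
  destruct (nfloor_ex (2 * N - 1) ltac:(lra)) as [m Hm].
  set (g := INR m / 2).
  assert (Hg : g + 1/2 <= N < g + 1) by (unfold g; lra).
  assert (Hg0 : 0 <= g) by (unfold g; pose proof (pos_INR m); lra).
  pose proof (wallis_prod_half_nat m) as Eup. fold g in Eup.
  pose proof (wallis_prod_half_nat (m + 2)) as Elo.
  replace (INR (m + 2) / 2) with (g + 1) in Elo by (unfold g; rewrite plus_INR; simpl; field).
  pose proof (wallis_ge0 N ltac:(lra)).
  pose proof (wallis_ge0 (g + 1) ltac:(lra)). pose proof (wallis_ge0 (g + 1 + 1/2) ltac:(lra)).
  pose proof (wallis_antimono g N ltac:(lra)). pose proof (wallis_antimono (g + 1/2) N ltac:(lra)).
  pose proof (wallis_antimono N (g + 1) ltac:(lra)). pose proof (wallis_antimono N (g + 1 + 1/2) ltac:(lra)).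
  simpl. rewrite Rmult_1_r. split.
  - apply Rle_trans with (PI / (g + 1 + 1)).
    + apply Rmult_le_compat_l; [pose proof PI_RGT_0; lra|]. apply Rinv_le_contravar; lra.
    + rewrite <- Elo. replace ((g + 1 + 1) * wallis (g + 1) * wallis (g + 1 + 1/2) / (g + 1 + 1))
        with (wallis (g + 1) * wallis (g + 1 + 1/2)) by (field; lra).
      apply Rmult_le_compat; lra.
  - apply Rle_trans with (PI / (g + 1)).
    + rewrite <- Eup. replace ((g + 1) * wallis g * wallis (g + 1/2) / (g + 1))
        with (wallis g * wallis (g + 1/2)) by (field; lra).
      apply Rmult_le_compat; lra.
    + apply Rmult_le_compat_l; [pose proof PI_RGT_0; lra|]. apply Rinv_le_contravar; lra.
Qed.

(** * Euler's limit for Gamma *)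

Definition gamma_seq_log_ratio (z : R) (n : nat) : R :=
  z * (ln (INR (S n)) - ln (INR n)) - (ln (z + INR (S n)) - ln (INR (S n))).

Lemma gamma_seq_gt0 (z : R) (n : nat) : 0 < z -> 0 < gamma_seq z n.
Proof.
  intros Hz. unfold gamma_seq, Rpower.
  pose proof (INR_fact_lt_0 n). pose proof (exp_pos (z * ln (INR n))). pose proof (poch_gt0 z (S n) Hz).
  apply Rdiv_lt_0_compat; [nra|lra].
Qed.

Lemma gamma_seq_succ (z : R) (n : nat) : 0 < z -> (1 <= n)%nat ->
  gamma_seq z (S n) = gamma_seq z n * exp (gamma_seq_log_ratio z n).
Proof.
  intros Hz Hn. assert (HN : 0 < INR n) by (apply lt_0_INR; lia).
  assert (HN1 : 0 < INR (S n)) by (apply lt_0_INR; lia).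
  unfold gamma_seq, Rpower, gamma_seq_log_ratio.
  replace (z * (ln (INR (S n)) - ln (INR n)) - (ln (z + INR (S n)) - ln (INR (S n))))
    with (z * ln (INR (S n)) + - (z * ln (INR n)) + ln (INR (S n)) + - ln (z + INR (S n))) by ring.
  rewrite !exp_plus, !exp_Ropp, !exp_ln, INR_fact_succ by lra.
  change (poch z (S (S n))) with (poch z (S n) * (z + INR (S n))).
  pose proof (INR_fact_lt_0 n). pose proof (exp_pos (z * ln (INR n))).
  pose proof (exp_pos (z * ln (INR (S n)))). pose proof (poch_gt0 z (S n) Hz).
  field. repeat split; lra.
Qed.

(* From [1 - 1/y <= ln y <= y - 1] at [y = (n+1)/n] and [y = (z+n+1)/(n+1)]. *)
Lemma gamma_seq_log_ratio_bounds (z : R) (n : nat) : 0 < z -> (1 <= n)%nat ->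
  0 <= gamma_seq_log_ratio z n <= z * (z + 1) * (/ INR n - / INR (S n)).
Proof.
  intros Hz Hn.
  assert (ln_lower : forall y, 0 < y -> 1 - / y <= ln y).
  { intros y Hy. pose proof (exp_ineq1_le (- ln y)). rewrite exp_Ropp, exp_ln in H by exact Hy. lra. }
  assert (ln_upper : forall y, 0 < y -> ln y <= y - 1).
  { intros y Hy. pose proof (exp_ineq1_le (ln y)). rewrite exp_ln in H by exact Hy. lra. }
  assert (HN : 1 <= INR n) by (apply (le_INR 1); lia).
  rewrite S_INR. unfold gamma_seq_log_ratio. rewrite S_INR.
  set (N := INR n) in *.
  rewrite <- !ln_div by lra.
  pose proof (ln_lower ((N + 1) / N) ltac:(apply Rdiv_lt_0_compat; lra)) as L1.
  pose proof (ln_upper ((N + 1) / N) ltac:(apply Rdiv_lt_0_compat; lra)) as L2.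
  pose proof (ln_lower ((z + (N + 1)) / (N + 1)) ltac:(apply Rdiv_lt_0_compat; lra)) as M1.
  pose proof (ln_upper ((z + (N + 1)) / (N + 1)) ltac:(apply Rdiv_lt_0_compat; lra)) as M2.
  replace (1 - / ((N + 1) / N)) with (/ (N + 1)) in L1 by (field; lra).
  replace ((N + 1) / N - 1) with (/ N) in L2 by (field; lra).
  replace (1 - / ((z + (N + 1)) / (N + 1))) with (z / (z + (N + 1))) in M1 by (field; lra).
  replace ((z + (N + 1)) / (N + 1) - 1) with (z / (N + 1)) in M2 by (field; lra).
  set (L := ln ((N + 1) / N)) in *. set (M := ln ((z + (N + 1)) / (N + 1))) in *.
  split.
  - assert (z * / (N + 1) <= z * L) by (apply Rmult_le_compat_l; lra).
    unfold Rdiv in M2. lra.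
  - assert (z * L <= z * / N) by (apply Rmult_le_compat_l; lra).
    assert (E : z * / N - z / (z + (N + 1)) = z * (z + 1) * / (N * (z + (N + 1)))) by (field; lra).
    assert (E2 : z * (z + 1) * (/ N - / (N + 1)) = z * (z + 1) * / (N * (N + 1))) by (field; lra).
    assert (z * (z + 1) * / (N * (z + (N + 1))) <= z * (z + 1) * / (N * (N + 1))).
    { apply Rmult_le_compat_l; [nra|]. apply Rinv_le_contravar; nra. }
    lra.
Qed.

Lemma Gamma_spec (z : R) : 0 < z -> Un_cv (gamma_seq z) (Gamma z) /\ 0 < Gamma z.
Proof.
  intros Hz.
  set (s := fun k => gamma_seq z (S k)).
  assert (Hg : Un_growing s).
  { intros k. unfold s. rewrite (gamma_seq_succ z (S k)) by (lia || lra).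
    pose proof (gamma_seq_log_ratio_bounds z (S k) Hz ltac:(lia)). pose proof (gamma_seq_gt0 z (S k) Hz).
    pose proof (exp_ineq1_le (gamma_seq_log_ratio z (S k))).
    nra. }
  assert (Hb : forall k, s k * exp (z * (z + 1) * / INR (S k)) <= s 0%nat * exp (z * (z + 1))).
  { induction k as [|k IH]; [unfold s; simpl; rewrite Rinv_1, Rmult_1_r; lra|].
    unfold s in *. rewrite (gamma_seq_succ z (S k)) by (lia || lra).
    pose proof (gamma_seq_log_ratio_bounds z (S k) Hz ltac:(lia)). pose proof (gamma_seq_gt0 z (S k) Hz).
    eapply Rle_trans; [|exact IH].
    rewrite Rmult_assoc, <- exp_plus. apply Rmult_le_compat_l; [lra|]. apply exp_le_compat. lra. }
  assert (Hub : has_ub s).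
  { exists (s 0%nat * exp (z * (z + 1))). intros x [k ->].
    eapply Rle_trans; [|apply (Hb k)].
    pose proof (gamma_seq_gt0 z (S k) Hz). pose proof (lt_0_INR (S k) ltac:(lia)).
    assert (0 <= z * (z + 1) * / INR (S k)).
    { apply Rmult_le_pos; [apply Rmult_le_pos; lra|left; apply Rinv_0_lt_compat; lra]. }
    pose proof (exp_ineq1_le (z * (z + 1) * / INR (S k))).
    unfold s. nra. }
  destruct (growing_cv s Hg Hub) as [l Hl].
  assert (Hcv : Un_cv (gamma_seq z) l).
  { intros eps Heps. destruct (Hl eps Heps) as [N HN]. exists (S N). intros [|n] Hn; [lia|].
    apply (HN n). lia. }
  assert (HG : Gamma z = l).
  { unfold Gamma. apply (UL_sequence (gamma_seq z)); [|exact Hcv].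
    apply epsilon_spec. exists l. exact Hcv. }
  rewrite HG. split; [exact Hcv|].
  pose proof (growing_ineq s l Hg Hl 0%nat). pose proof (gamma_seq_gt0 z 1 Hz). unfold s in *. lra.
Qed.

Lemma is_lim_seq_wallis_sqr (lam : R) : 0 <= lam ->
  is_lim_seq (fun n => INR n * wallis (lam + INR (S n)) ^ 2) PI.
Proof.
  intros Hl. pose proof PI_RGT_0.
  apply (is_lim_seq_le_le_loc (fun n => PI - PI * (lam + 5/2) / INR n) _ (fun _ => PI));
    [|apply is_lim_seq_sub_div_INR|apply is_lim_seq_const].
  exists 1%nat. intros n Hn.
  assert (Hn1 : 1 <= INR n) by (apply (le_INR 1); lia).
  assert (HN : INR n <= lam + INR (S n)) by (rewrite S_INR; lra).
  destruct (wallis_sqr_bounds (lam + INR (S n)) ltac:(lra)) as [Hlo Hup].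
  rewrite S_INR in *. split.
  - apply Rle_trans with (INR n * (PI / (lam + (INR n + 1) + 3/2))); [|apply Rmult_le_compat_l; lra].
    replace (INR n * (PI / (lam + (INR n + 1) + 3/2)))
      with (PI - PI * (lam + 5/2) / (lam + INR n + 5/2)) by (field; lra).
    assert (PI * (lam + 5/2) / (lam + INR n + 5/2) <= PI * (lam + 5/2) / INR n); [|lra].
    apply Rmult_le_compat_l; [nra|]. apply Rinv_le_contravar; lra.
  - apply Rle_trans with (INR n * (PI / (lam + (INR n + 1)))); [apply Rmult_le_compat_l; lra|].
    apply (Rmult_le_reg_r (lam + (INR n + 1))); [lra|].
    replace (INR n * (PI / (lam + (INR n + 1))) * (lam + (INR n + 1))) with (INR n * PI) by (field; lra).
    nra.
Qed.

(* Both are [(lam + 3/2)_(n+1) / ((lam + 1)_(n+1) sqrt n)], by [wallis_poch]. *)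
Lemma gamma_seq_ratio (lam : R) (n : nat) : 0 <= lam -> (1 <= n)%nat ->
  gamma_seq (lam + 1) n / gamma_seq (lam + 3/2) n
  = wallis lam / sqrt (INR n * wallis (lam + INR (S n)) ^ 2).
Proof.
  intros Hl Hn.
  assert (Hn0 : 0 < INR n) by (apply lt_0_INR; lia).
  set (N := lam + INR (S n)).
  assert (HN : 1/2 <= N) by (unfold N; rewrite S_INR; pose proof (pos_INR n); lra).
  assert (HK : 0 < wallis N).
  { destruct (wallis_sqr_bounds N HN) as [Hlo _].
    assert (0 < PI / (N + 3/2)) by (apply Rdiv_lt_0_compat; [apply PI_RGT_0|lra]).
    destruct (wallis_ge0 N ltac:(lra)) as [Hpos|Hz]; [exact Hpos|].
    rewrite <- Hz, pow_i in Hlo by lia. lra. }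
  assert (HK0 : 0 < wallis lam)
    by (pose proof (wallis_antimono lam N ltac:(unfold N; pose proof (pos_INR (S n)); lra)); lra).
  assert (E : poch (lam + 3/2) (S n) = wallis lam * poch (lam + 1) (S n) / wallis N)
    by (rewrite <- (wallis_poch lam (S n) Hl); fold N; field; lra).
  unfold gamma_seq.
  rewrite sqrt_mult_alt, sqrt_pow2, E by lra.
  replace (lam + 3/2) with ((lam + 1) + / 2) by field.
  rewrite (Rpower_plus (lam + 1) (/ 2) (INR n)), Rpower_sqrt by exact Hn0.
  pose proof (poch_gt0 (lam + 1) (S n) ltac:(lra)). pose proof (INR_fact_lt_0 n).
  pose proof (sqrt_lt_R0 _ Hn0). pose proof (exp_pos ((lam + 1) * ln (INR n))).
  unfold Rpower at 1 2. field. repeat split; lra.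
Qed.

Lemma Gamma_ratio (lam : R) : 0 <= lam -> Gamma (lam + 1) / Gamma (lam + 3/2) = wallis lam / sqrt PI.
Proof.
  intros Hl.
  destruct (Gamma_spec (lam + 1)) as [C1 _]; [lra|].
  destruct (Gamma_spec (lam + 3/2)) as [C2 P2]; [lra|].
  apply is_lim_seq_Reals in C1, C2.
  pose proof PI_RGT_0.
  assert (Hf : continuity_pt (fun x => wallis lam / sqrt x) PI).
  { apply continuity_pt_div; [apply continuity_pt_const; intros ??; reflexivity|
                              apply continuity_pt_sqrt; lra|].
    apply Rgt_not_eq, sqrt_lt_R0. lra. }
  assert (L1 : is_lim_seq (fun n => gamma_seq (lam + 1) n / gamma_seq (lam + 3/2) n)
                          (wallis lam / sqrt PI)).
  { apply (is_lim_seq_ext_loc (fun n => wallis lam / sqrt (INR n * wallis (lam + INR (S n)) ^ 2))).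
    - exists 1%nat. intros n Hn. symmetry. apply gamma_seq_ratio; assumption.
    - exact (is_lim_seq_continuous _ _ _ Hf (is_lim_seq_wallis_sqr lam Hl)). }
  assert (L2 := is_lim_seq_div' _ _ _ _ C1 C2 ltac:(lra)).
  apply is_lim_seq_unique in L1, L2. rewrite L2 in L1. injection L1. auto.
Qed.

Lemma c_const_wallis (n : nat) (lam : R) : 0 <= lam ->
  c_const n lam = poch (2 * lam + 1) n / INR (Factorial.fact n) * wallis lam.
Proof.
  intros Hl. unfold c_const. rewrite Gamma_ratio by exact Hl.
  pose proof (sqrt_lt_R0 PI PI_RGT_0). pose proof (INR_fact_lt_0 n). field. lra.
Qed.

(** * The Abel-type integrals [Iplus] and [Iminus] *)

Lemma imp_int_right_of_continuous (f V : R -> R) (a b : R) : a < b ->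
  (forall c, a <= c < b -> Defs.is_RInt f a c (V c)) -> continuous V b ->
  imp_int_right f a b (V b).
Proof.
  intros Hab HV Hc. right. split; [exact Hab|]. intros eps Heps.
  apply continuity_pt_filterlim in Hc.
  destruct (Hc eps Heps) as [d [Hd Hd']]. exists d. split; [exact Hd|].
  intros c Hac Hcb. exists (V c). split; [apply HV; lra|].
  apply (Hd' c). split; [split; [exact I|lra]|].
  simpl. unfold R_dist. rewrite Rabs_left; lra.
Qed.

Lemma imp_int_left_of_opp (f g : R -> R) (a b l : R) : (forall t, g t = f (- t)) ->
  imp_int_right g (- b) (- a) l -> imp_int_left f a b l.
Proof.
  intros Hg [[Hab Hl]|[Hab H]]; [left; split; [lra|exact Hl]|right; split; [lra|]].
  intros eps Heps. destruct (H eps Heps) as [d [Hd Hc]].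
  exists d. split; [exact Hd|]. intros c Hcb Hc2.
  destruct (Hc (- c) ltac:(lra) ltac:(lra)) as [v [Hv Hvl]].
  exists v. split; [|exact Hvl].
  apply is_RInt_of_Riemann in Hv.
  pose proof (is_RInt_opp _ _ _ _ (is_RInt_swap _ _ _ _ (is_RInt_comp_opp g b c v Hv))) as H1.
  rewrite opp_opp in H1.
  apply Riemann_of_is_RInt, (is_RInt_ext_R (fun y => opp (opp (g (- y))))); [|exact H1].
  intros t _. unfold opp; simpl. rewrite Ropp_involutive, Hg, Ropp_involutive. reflexivity.
Qed.

(* The integrand of [I^lam_+ p (x)] after the substitution [t = x - (1 + x) u ^ 2]. *)
Definition abel_integrand (lam x : R) (p : R -> R) (u : R) : R :=
  2 * sqrt (1 + x) * pospow lam ((1 + x) * (1 - u ^ 2)) * p (x - (1 + x) * u ^ 2).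

Lemma ex_RInt_abel_integrand (lam x : R) (p : R -> R) (a b : R) :
  0 <= lam -> (forall t, continuous p t) -> ex_RInt (abel_integrand lam x p) a b.
Proof.
  intros Hl Hp. apply ex_RInt_continuous_R. intros u _. unfold abel_integrand.
  apply continuous_mult_R; [apply continuous_mult_R; [apply continuous_const|]|].
  - apply (continuous_comp_R (fun u => (1 + x) * (1 - u ^ 2)) (pospow lam));
      [apply ex_derive_continuous_R; auto_derive; exact I|apply continuous_pospow, Hl].
  - apply (continuous_comp_R (fun u => x - (1 + x) * u ^ 2) p);
      [apply ex_derive_continuous_R; auto_derive; exact I|apply Hp].
Qed.

Lemma continuous_abel_kernel (lam x : R) (p : R -> R) (t : R) :
  0 <= lam -> (forall t, continuous p t) -> t < x ->
  continuous (fun t => / sqrt (x - t) * pospow lam (1 + t) * p t) t.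
Proof.
  intros Hl Hp Ht. apply continuous_mult_R; [apply continuous_mult_R|apply Hp].
  - apply (continuous_comp_R (fun t => sqrt (x - t)) Rinv).
    + apply (continuous_comp_R (fun t => x - t) sqrt);
        [apply ex_derive_continuous_R; auto_derive; exact I|].
      apply continuity_pt_filterlim, continuity_pt_sqrt. lra.
    + apply continuity_pt_filterlim, continuity_pt_inv; [apply continuity_pt_id|].
      apply Rgt_not_eq, sqrt_lt_R0. lra.
  - apply (continuous_comp_R (fun t => 1 + t) (pospow lam));
      [apply ex_derive_continuous_R; auto_derive; exact I|apply continuous_pospow, Hl].
Qed.

Lemma abel_integrand_subst (lam x : R) (p : R -> R) (u : R) : -1 < x -> 0 < u ->
  -2 * (1 + x) * u * (/ sqrt (x - (x - (1 + x) * u ^ 2)) * pospow lam (1 + (x - (1 + x) * u ^ 2))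
                      * p (x - (1 + x) * u ^ 2))
  = -1 * abel_integrand lam x p u.
Proof.
  intros Hx Hu. unfold abel_integrand.
  replace (x - (x - (1 + x) * u ^ 2)) with ((1 + x) * u ^ 2) by ring.
  replace (1 + (x - (1 + x) * u ^ 2)) with ((1 + x) * (1 - u ^ 2)) by ring.
  rewrite sqrt_mult_alt, sqrt_pow2 by lra.
  pose proof (sqrt_lt_R0 (1 + x) ltac:(lra)). rewrite <- (sqrt_sqrt (1 + x)) at 1 by lra.
  field. lra.
Qed.

Lemma is_RInt_abel_subst (lam x c : R) (p : R -> R) :
  0 <= lam -> -1 <= c < x -> (forall t, continuous p t) ->
  is_RInt (fun t => / sqrt (x - t) * pospow lam (1 + t) * p t) (-1) c
    (RInt (abel_integrand lam x p) (sqrt ((x - c) / (1 + x))) 1).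
Proof.
  intros Hl Hc Hp.
  set (f := fun t => / sqrt (x - t) * pospow lam (1 + t) * p t).
  set (h := 1 + x). assert (Hh : 0 < h) by (unfold h; lra).
  set (uc := sqrt ((x - c) / h)).
  assert (Hq : 0 < (x - c) / h) by (apply Rdiv_lt_0_compat; lra).
  assert (Huc0 : 0 < uc) by (apply sqrt_lt_R0, Hq).
  assert (Huc2 : uc ^ 2 = (x - c) / h) by (unfold uc; rewrite <- Rsqr_pow2; apply Rsqr_sqrt; lra).
  assert (Huc1 : uc <= 1).
  { unfold uc. rewrite <- sqrt_1. apply sqrt_le_1_alt.
    apply (Rmult_le_reg_r h); [lra|]. unfold Rdiv. rewrite Rmult_assoc, Rinv_l by lra. unfold h. lra. }
  assert (Hfex : ex_RInt f (-1) c).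
  { apply ex_RInt_continuous_R. intros t Ht. rewrite Rmax_right in Ht by lra.
    apply continuous_abel_kernel; [exact Hl|exact Hp|lra]. }
  assert (Hcomp : forall u, Rmin uc 1 <= u <= Rmax uc 1 -> continuous f (x - h * u ^ 2)).
  { intros u Hu. rewrite Rmin_left, Rmax_right in Hu by lra.
    apply continuous_abel_kernel; [exact Hl|exact Hp|].
    assert (0 < h * u ^ 2) by (apply Rmult_lt_0_compat; [lra|apply pow_lt; lra]). lra. }
  assert (Hder : forall u, Rmin uc 1 <= u <= Rmax uc 1 ->
                   is_derive (fun u => x - h * u ^ 2) u (-2 * h * u) /\ continuous (fun u => -2 * h * u) u).
  { intros u _. split; [auto_derive; [exact I|ring]|apply ex_derive_continuous_R; auto_derive; exact I]. }
  pose proof (RInt_comp f (fun u => x - h * u ^ 2) (fun u => -2 * h * u) uc 1 Hcomp Hder) as Hsubst.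
  cbv beta in Hsubst.
  replace (x - h * uc ^ 2) with c in Hsubst by (rewrite Huc2; field; lra).
  replace (x - h * 1 ^ 2) with (-1) in Hsubst by (unfold h; ring).
  rewrite <- (opp_RInt_swap f (-1) c Hfex) in Hsubst.
  rewrite (RInt_ext_R _ (fun u => -1 * abel_integrand lam x p u)), RInt_scal_R in Hsubst;
    [|apply ex_RInt_abel_integrand; assumption|].
  2:{ intros u Hu. rewrite Rmin_left, Rmax_right in Hu by lra. apply abel_integrand_subst; lra. }
  replace (RInt (abel_integrand lam x p) uc 1) with (RInt f (-1) c)
    by (change (opp (RInt f (-1) c)) with (- RInt f (-1) c) in Hsubst; lra).
  apply (RInt_correct (V := R_CompleteNormedModule)), Hfex.
Qed.

(* Over [-1, c] the integral is [RInt G (uc c) 1] by [is_RInt_abel_subst], and this is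
   continuous in [c] up to [c = x], where [uc x = 0]. *)
Lemma imp_int_right_abel (lam x : R) (p : R -> R) :
  0 <= lam -> -1 < x -> (forall t, continuous p t) ->
  imp_int_right (fun t => / sqrt (x - t) * rpow (1 + t) lam * p t) (-1) x
    (RInt (abel_integrand lam x p) 0 1).
Proof.
  intros Hl Hx Hp.
  set (G := abel_integrand lam x p).
  set (uc := fun c => sqrt ((x - c) / (1 + x))).
  replace (RInt G 0 1) with ((fun c => RInt G (uc c) 1) x)
    by (unfold uc; rewrite Rminus_diag, Rdiv_0_l, sqrt_0; reflexivity).
  apply (imp_int_right_of_continuous _ (fun c => RInt G (uc c) 1)); [exact Hx| |].
  - intros c Hc. apply Riemann_of_is_RInt.
    apply (is_RInt_ext_R (fun t => / sqrt (x - t) * pospow lam (1 + t) * p t));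
      [|apply is_RInt_abel_subst; [exact Hl|lra|exact Hp]].
    intros t Ht. rewrite Rmin_left, Rmax_right in Ht by lra.
    rewrite pospow_pos, rpow_Rpower by lra. reflexivity.
  - apply (continuous_comp_R uc (fun u => RInt G u 1)).
    + apply (continuous_comp_R (fun c => (x - c) / (1 + x)) sqrt).
      * apply ex_derive_continuous_R. auto_derive. lra.
      * apply continuity_pt_filterlim, continuity_pt_sqrt.
        rewrite Rminus_diag, Rdiv_0_l; lra.
    + apply (continuous_RInt_2 G _ 1). apply filter_forall. intros z.
      apply (RInt_correct (V := R_CompleteNormedModule)), ex_RInt_abel_integrand; assumption.
Qed.

(* Termwise, by [wallis_poch]: the weight [(1 - u^2)^lam] turns the bottom
   parameter [lam + 1] into [lam + 3/2]. *)
Lemma RInt_pospow_hyp2F1 (lam h a b : R) (N : nat) : 0 <= lam -> 0 < h ->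
  RInt (fun u => pospow lam (h * (1 - u ^ 2)) * hyp2F1_term a b (lam + 1) (h / 2 * (1 - u ^ 2)) N) 0 1
  = Rpower h lam * wallis lam / 2 * hyp2F1_term a b (lam + 3/2) (h / 2) N.
Proof.
  intros Hl Hh.
  set (C := fun k => Rpower h lam / 2 * hyp2F1_coef a b (lam + 1) k * (h / 2) ^ k).
  rewrite (RInt_ext_R _ (fun u => sum_f_R0 (fun k => C k * (2 * pospow (lam + INR k) (1 - u ^ 2))) N)).
  2:{ intros u Hu. rewrite Rmin_left, Rmax_right in Hu by lra.
      assert (Hy : 0 <= 1 - u ^ 2) by nra.
      rewrite pospow_mul by assumption.
      unfold hyp2F1_term. rewrite scal_sum. apply sum_eq. intros k _.
      unfold C. rewrite <- pospow_mul_pow, Rpow_mult_distr by lra. unfold hyp2F1_coef.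
      pose proof (poch_gt0 (lam + 1) k ltac:(lra)). pose proof (INR_fact_lt_0 k).
      field. split; lra. }
  rewrite RInt_sum_f_R0.
  2:{ intros k. apply ex_RInt_scal_R, ex_RInt_wallis. pose proof (pos_INR k). lra. }
  unfold hyp2F1_term. rewrite scal_sum. apply sum_eq. intros k _.
  rewrite RInt_scal_R by (apply ex_RInt_wallis; pose proof (pos_INR k); lra).
  fold (wallis (lam + INR k)).
  pose proof (poch_gt0 (lam + 3/2) k ltac:(lra)). pose proof (poch_gt0 (lam + 1) k ltac:(lra)).
  pose proof (INR_fact_lt_0 k).
  replace (wallis (lam + INR k)) with (wallis lam * poch (lam + 1) k / poch (lam + 3/2) k)
    by (rewrite <- (wallis_poch lam k Hl); field; lra).
  unfold C, hyp2F1_coef. field. repeat split; lra.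
Qed.

Lemma Iplus_hyp2F1 (lam kap a b x : R) (N : nat) (p : R -> R) : 0 <= lam -> -1 <= x ->
  (forall t, p t = kap * hyp2F1_term a b (lam + 1) ((1 + t) / 2) N) ->
  Iplus lam p x (kap * wallis lam * (1 + x) * hyp2F1_term a b (lam + 3/2) ((1 + x) / 2) N).
Proof.
  intros Hl Hx Hp.
  destruct (Req_dec x (-1)) as [->|Hx1].
  { exists 0. split; [left; split; reflexivity|]. replace (1 + -1) with 0 by ring. ring. }
  assert (Hh : 0 < 1 + x) by lra.
  exists (RInt (abel_integrand lam x p) 0 1). split.
  - apply imp_int_right_abel; [exact Hl|lra|].
    intros t. apply (continuous_ext (fun t => kap * hyp2F1_term a b (lam + 1) ((1 + t) / 2) N));
      [intros s; symmetry; apply Hp|].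
    apply continuous_mult_R; [apply continuous_const|].
    apply continuous_hyp2F1_term_comp; [lra|apply ex_derive_continuous_R; auto_derive; exact I].
  - unfold abel_integrand.
    rewrite (RInt_ext_R _ (fun u => 2 * sqrt (1 + x) * kap * (pospow lam ((1 + x) * (1 - u ^ 2)) *
               hyp2F1_term a b (lam + 1) ((1 + x) / 2 * (1 - u ^ 2)) N))).
    2:{ intros u _. rewrite Hp.
        replace ((1 + (x - (1 + x) * u ^ 2)) / 2) with ((1 + x) / 2 * (1 - u ^ 2)) by field.
        ring. }
    assert (Hex : ex_RInt (fun u => pospow lam ((1 + x) * (1 - u ^ 2)) *
                                    hyp2F1_term a b (lam + 1) ((1 + x) / 2 * (1 - u ^ 2)) N) 0 1).
    { apply ex_RInt_continuous_R. intros u _. apply continuous_mult_R.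
      - apply (continuous_comp_R (fun u => (1 + x) * (1 - u ^ 2)) (pospow lam));
          [apply ex_derive_continuous_R; auto_derive; exact I|apply continuous_pospow, Hl].
      - apply continuous_hyp2F1_term_comp; [lra|apply ex_derive_continuous_R; auto_derive; exact I]. }
    rewrite RInt_scal_R, RInt_pospow_hyp2F1, rpow_Rpower by (assumption || lra).
    rewrite <- Rpower_sqrt by exact Hh.
    transitivity (Rpower (1 + x) (- lam + 1/2) * Rpower (1 + x) (/ 2) * Rpower (1 + x) lam
                  * kap * wallis lam * hyp2F1_term a b (lam + 3/2) ((1 + x) / 2) N); [field|].
    rewrite <- !Rpower_plus. replace (- lam + 1/2 + / 2 + lam) with 1 by field.
    rewrite Rpower_1 by exact Hh. ring.
Qed.

Lemma Iminus_of_Iplus_opp (lam x v : R) (f : R -> R) :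
  Iplus lam (fun t => f (- t)) (- x) v -> Iminus lam f x v.
Proof.
  intros [l [Hl Hv]]. exists l. split.
  - apply (imp_int_left_of_opp _ (fun t => / sqrt (- x - t) * rpow (1 + t) lam * f (- t))).
    + intros t. replace (- t - x) with (- x - t) by ring.
      replace (1 - - t) with (1 + t) by ring. reflexivity.
    + replace (- 1) with (-1) by ring. exact Hl.
  - replace (1 - x) with (1 + - x) by ring. exact Hv.
Qed.

Theorem proposition3p1 (lam : R) (n : nat) (x : R) :
  0 <= lam -> -1 <= x <= 1 ->
  Iplus lam (gegenbauer (lam + 1/2) n) x
    (c_const n lam * ((lam + 1/2) / (lam + INR n + 1/2)) * (1 + x)
       * hyp2F1_term (- INR n) (INR n + 2 * lam + 1) (lam + 1/2) ((1 - x) / 2) n)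
  /\
  Iminus lam (gegenbauer (lam + 1/2) n) x
    (c_const n lam * (1 - x)
       * hyp2F1_term (- INR n) (INR n + 2 * lam + 1) (lam + 3/2) ((1 - x) / 2) n).
Proof.
  intros Hl Hx.
  rewrite c_const_wallis by exact Hl.
  set (d := poch (2 * lam + 1) n / INR (Factorial.fact n)).
  split.
  (* Parity moves the expansion of [gegenbauer_opp_hyp2F1] to [t]; [hyp2F1_term_reflect]
     then trades [(1 + x) / 2] and [lam + 3/2] for [(1 - x) / 2] and [lam + 1/2]. *)
  - replace (d * wallis lam * ((lam + 1/2) / (lam + INR n + 1/2)) * (1 + x)
               * hyp2F1_term (- INR n) (INR n + 2 * lam + 1) (lam + 1/2) ((1 - x) / 2) n)
      with (d * wallis lam * (1 + x) *
            ((-1) ^ n * hyp2F1_term (- INR n) (INR n + 2 * lam + 1) (lam + 3/2) ((1 + x) / 2) n)).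
    + rewrite <- Rmult_assoc, (Rmult_comm _ ((-1) ^ n)), <- !Rmult_assoc.
      apply Iplus_hyp2F1; [exact Hl|lra|]. intros t.
      rewrite <- (Ropp_involutive t) at 1. rewrite gegenbauer_opp, gegenbauer_opp_hyp2F1 by exact Hl.
      fold d. ring.
    + replace ((1 + x) / 2) with (1 - (1 - x) / 2) by field.
      rewrite hyp2F1_term_reflect by exact Hl. ring.
  - apply Iminus_of_Iplus_opp.
    replace (1 - x) with (1 + - x) by ring.
    apply Iplus_hyp2F1; [exact Hl|lra|intros t; apply gegenbauer_opp_hyp2F1, Hl].
Qed.
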